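(* Let $p$ be a prime with $p \equiv \pm 3 \pmod 8$. Then $2p$ is not $\pi/4$-congruent.
   Context: A positive integer $n$ is called $\pi/4$-congruent if there exist positive rationals $a,b,c$ such that the triangle with sides $a$, $b\sqrt 2$, $c$ has angle $\pi/4$ opposite the side $c$ and area $n$; equivalently $ab = 2n$ and $c^2 = a^2 + 2b^2 - 2ab$. *)

From mathcomp Require Import all_boot all_order all_algebra.
Set Implicit Arguments. Unset Strict Implicit. Unset Printing Implicit Defensive.
Import Order.TTheory GRing.Theory Num.Theory.
Local Open Scope ring_scope.

(* A positive integer n is pi/4-congruent if there are positive rationals
   a, b, c with a*b = 2n and c^2 = a^2 + 2 b^2 - 2 a b (the triangle with
   sides a, b*sqrt 2, c has angle pi/4 opposite c and area n). *)
Definition pi4_congruent (n : nat) : Prop :=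
  (0 < n)%N /\
  exists a b c : rat, [/\ 0 < a, 0 < b, 0 < c,
    a * b = 2 * n%:R & c ^+ 2 = a ^+ 2 + 2 * b ^+ 2 - 2 * a * b].

From mathcomp Require Import all_boot all_order all_algebra.
From mathcomp Require Import zify ring lra.
Set Implicit Arguments. Unset Strict Implicit. Unset Printing Implicit Defensive.
Import Order.TTheory GRing.Theory Num.Theory.

(* Writing b / (c + a - b) = M / N in lowest terms turns a pi/4-triangle of
   area 2p into coprime M, N > 0 such that 2p M N L is a square, where
   L = N^2 + 2MN - M^2, i.e. L + 2M^2 = (M + N)^2.  The pairwise coprime
   factors M, N, L are squares up to divisors of 2p, and congruences modulo 8
   (p is not +-1 mod 8) rule out every distribution of these divisors except
   M = 2p x^2, N = y^2, L = z^2.  Then z^2 + 2M^2 = (M + N)^2 parametrizes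
   M + N = s^2 + 2t^2, M = 2st, and (y + t - s, t) is a strictly smaller
   solution: infinite descent. *)

Lemma coprime_mul_eq_sq a b c : coprime a b -> a * b = c ^ 2 ->
  exists s t, [/\ a = s ^ 2, b = t ^ 2 & c = s * t].
Proof.
suff sq_gcd x y : coprime x y -> x * y = c ^ 2 -> x = gcdn x c ^ 2.
  move=> co eq_ab; exists (gcdn a c), (gcdn b c).
  have ea := sq_gcd a b co eq_ab.
  have eb : b = gcdn b c ^ 2 by apply: (sq_gcd b a); rewrite 1?coprime_sym // mulnC.
  by split=> //; apply/eqP; rewrite -(eqn_exp2r _ _ (isT : 0 < 2)) expnMn -ea -eb eq_ab.
move=> co eq_xy; apply/eqP; rewrite eqn_dvd; apply/andP; split.
- have -> : gcdn x c ^ 2 = gcdn (x * gcdn x c) (c * gcdn x c) by rewrite -muln_gcdl mulnn.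
  by rewrite dvdn_gcd dvdn_mulr //= muln_gcdr mulnn -eq_xy dvdn_gcd dvdn_mull // dvdn_mulr.
- have co_gy : coprime (gcdn x c ^ 2) y by rewrite coprimeXl // (coprime_dvdl (dvdn_gcdl x c)).
  by rewrite -(Gauss_dvdl x co_gy) eq_xy dvdn_exp2r // dvdn_gcdr.
Qed.

Lemma coprime_mul_eq_double_sq a b c : coprime a b -> a * b = 2 * c ^ 2 ->
  exists s t, [/\ a + b = s ^ 2 + 2 * t ^ 2, c = s * t & coprime s t].
Proof.
wlog /dvdnP[a' ->] : a b / 2 %| a.
  move=> wlog_even co eq_ab.
  have : 2 %| a * b by rewrite eq_ab dvdn_mulr.
  rewrite Euclid_dvdM // => /orP[even_a | even_b]; first exact: wlog_even.
  by rewrite addnC; apply: wlog_even even_b _ _; rewrite 1?coprime_sym // mulnC.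
move=> co eq_ab.
have co' : coprime a' b by apply: coprime_dvdl co; apply: dvdn_mulr.
have eq_a'b : a' * b = c ^ 2 by lia.
have [s [t [ea' eb ->]]] := coprime_mul_eq_sq co' eq_a'b.
exists t, s; split; [lia | by rewrite mulnC |].
by move: co'; rewrite ea' eb coprime_sym coprime_pexpl // coprime_pexpr.
Qed.

Lemma sq_mul_eq_sq g a k : 0 < g -> g ^ 2 * a = k ^ 2 -> exists j, a = j ^ 2.
Proof.
move=> g_gt0 eq_k; have : g ^ 2 %| k ^ 2 by rewrite -eq_k dvdn_mulr.
rewrite dvdn_pexp2r // => /dvdnP[j eq_j]; exists j.
by apply/eqP; rewrite -(eqn_pmul2l (_ : 0 < g ^ 2)) ?expn_gt0 ?g_gt0 // eq_k eq_j; apply/eqP; ring.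
Qed.

Lemma coprime_gcd_cofactors m n m' n' :
  0 < gcdn m n -> m = m' * gcdn m n -> n = n' * gcdn m n -> coprime m' n'.
Proof.
move=> g_gt0 eq_m eq_n.
by rewrite /coprime -(eqn_pmul2r g_gt0) mul1n muln_gcdl -eq_m -eq_n.
Qed.

Lemma coprime_mul_sq_gcd q X Y k : coprime X Y -> q * X * Y = k ^ 2 ->
  exists x, X = gcdn q X * x ^ 2.
Proof.
move=> co eq_k; have [-> | X_gt0] := posnP X; first by exists 0; rewrite muln0.
have g_gt0 : 0 < gcdn q X by rewrite gcdn_gt0 X_gt0 orbT.
have [q' eq_q] := dvdnP (dvdn_gcdl q X); have [X' eq_X] := dvdnP (dvdn_gcdr q X).
have co_q'X' := coprime_gcd_cofactors g_gt0 eq_q eq_X.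
set g := gcdn q X in g_gt0 eq_q eq_X *.
have [j eq_j] : exists j, q' * X' * Y = j ^ 2.
  by apply: (sq_mul_eq_sq (k := k) g_gt0); rewrite -eq_k eq_q eq_X; ring.
have co_X' : coprime X' (q' * Y).
  by rewrite coprimeMr coprime_sym co_q'X' (coprime_dvdl _ co) // eq_X dvdn_mulr.
have eq_X'j : X' * (q' * Y) = j ^ 2 by rewrite mulnCA mulnA.
have [x [s [eX' _ _]]] := coprime_mul_eq_sq co_X' eq_X'j.
by exists x; rewrite {1}eq_X eX' mulnC.
Qed.

Lemma prime_mul_sq_eq_sq p m k : prime p -> p * m ^ 2 = k ^ 2 -> m = 0.
Proof.
move=> p_pr eq_k; apply/eqP; rewrite -leqn0 leqNgt; apply/negP => m_gt0.
have k_gt0 : 0 < k by move: eq_k (prime_gt0 p_pr); nia.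
have m2_gt0 : 0 < m ^ 2 by rewrite expn_gt0 m_gt0.
have := congr1 (odd \o logn p) eq_k.
by rewrite /= (lognM _ (prime_gt0 p_pr) m2_gt0) !lognX logn_prime // eqxx oddD !oddM.
Qed.

Lemma sq_add_double_sq_param Z w m : odd Z -> coprime Z w -> w ^ 2 + 2 * m ^ 2 = Z ^ 2 ->
  exists s t, [/\ Z = s ^ 2 + 2 * t ^ 2, m = 2 * (s * t), odd s & coprime s t].
Proof.
move=> odd_Z co eq_Z.
have odd_w : odd w by move: (congr1 odd eq_Z); rewrite oddD !oddX oddM /= odd_Z addbF.
have le_wZ : w <= Z by rewrite -(leq_exp2r _ _ (isT : 0 < 2)) -eq_Z leq_addr.
have /dvdnP[A eq_A] : 2 %| Z - w by rewrite dvdn2 oddB // odd_Z odd_w.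
have eq_Z' : Z = w + A * 2 by lia.
have eq_m : m ^ 2 = 2 * (A * (A + w)) by move: eq_Z; rewrite eq_Z'; lia.
have : 2 %| m ^ 2 by rewrite eq_m dvdn_mulr.
rewrite Euclid_dvdX // andbT => /dvdnP[c eq_c].
have co_A : coprime A (A + w).
  rewrite /coprime gcdnDl -dvdn1 -(eqP co) dvdn_gcd dvdn_gcdr eq_Z' andbT.
  by rewrite dvdn_add ?dvdn_gcdr ?dvdn_mulr ?dvdn_gcdl.
have [s [t [eq_st eq_cst co_st]]] : exists s t,
    [/\ A + (A + w) = s ^ 2 + 2 * t ^ 2, c = s * t & coprime s t].
  by apply: coprime_mul_eq_double_sq co_A _; move: eq_m; rewrite eq_c; lia.
have eq_Zst : Z = s ^ 2 + 2 * t ^ 2 by lia.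
exists s, t; split => //; first by rewrite eq_c eq_cst mulnC.
by move: odd_Z; rewrite eq_Zst oddD oddM /= addbF oddX.
Qed.

Section ResiduesMod8.
Local Open Scope ring_scope.

Lemma natrZ8_mul4 n : 4 * (n%:R : 'Z_8) = 4 * (odd n)%:R.
Proof.
rewrite -[in LHS](odd_double_half n) natrD -muln2 natrM mulrDr.
have -> : 4 * ((n./2)%:R * 2%:R) = (8 : 'Z_8) * n./2%:R by ring.
by rewrite pchar_Zp ?mul0r ?addr0.
Qed.

Lemma natrZ8_double_sqr n : 2 * (n%:R : 'Z_8) ^+ 2 = 2 * (odd n)%:R.
Proof.
rewrite -[in LHS](odd_double_half n) natrD -muln2 natrM.
have -> : 2 * ((odd n)%:R + (n./2)%:R * 2%:R) ^+ 2
    = 2 * (odd n)%:R ^+ 2 + (8 : 'Z_8) * ((odd n)%:R * n./2%:R + n./2%:R ^+ 2) by ring.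
by rewrite pchar_Zp // mul0r addr0; case: (odd n); rewrite ?expr1n ?expr0n.
Qed.

Lemma natrZ8_sqr_odd n : odd n -> (n%:R : 'Z_8) ^+ 2 = 1.
Proof.
move=> odd_n; rewrite -(odd_double_half n) odd_n natrD -muln2 natrM.
have -> : (1%:R + (n./2)%:R * 2%:R) ^+ 2 = 1 + 4 * (n./2 * n./2.+1)%:R :> 'Z_8.
  by rewrite natrM -[n./2.+1]addn1 natrD; ring.
by rewrite natrZ8_mul4 oddM oddS andbN mulr0 addr0.
Qed.

Lemma natrZ8_mul_sqr_odd m n : odd n -> ((m * n ^ 2)%:R : 'Z_8) = m%:R.
Proof. by move=> odd_n; rewrite natrM natrX natrZ8_sqr_odd // mulr1. Qed.

End ResiduesMod8.

Lemma rat_sqr_eq_nat (r : rat) n : (r ^+ 2 = n%:R)%R -> exists k, n = k ^ 2.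
Proof.
move=> eq_r; exists `|numq r|.
have eq_nd : `|numq r| ^ 2 = n * `|denq r| ^ 2.
  apply/eqP; rewrite -(eqr_nat rat) natrM !natrX !natr_absz intr_norm normr_denq.
  by rewrite real_normK ?num_real // numqE exprMn eq_r.
have d1 : `|denq r| ^ 2 = 1.
  have co : coprime (`|denq r| ^ 2) (`|numq r| ^ 2).
    by rewrite coprimeXl // coprimeXr // coprime_sym coprime_num_den.
  by rewrite -[RHS](eqP co); symmetry; apply/gcdn_idPl; rewrite eq_nd dvdn_mull.
by rewrite eq_nd d1 muln1.
Qed.

Section Descent.
Variable p : nat.
Hypothesis p_prime : prime p.
Hypothesis p_mod8 : p %% 8 = 3 \/ p %% 8 = 5.

Lemma odd_dvdn_2p d : odd d -> d %| 2 * p -> d = 1 \/ d = p.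
Proof.
move=> odd_d; rewrite Gauss_dvdr ?coprimen2 //.
by case/primeP: p_prime => _ /[apply] /orP[] /eqP; [left | right].
Qed.

Lemma even_dvdn_2p d : ~~ odd d -> d %| 2 * p -> d = 2 \/ d = 2 * p.
Proof.
rewrite -dvdn2 => /dvdnP[d' ->]; rewrite mulnC dvdn_pmul2l //.
by case/primeP: p_prime => _ /[apply] /orP[] /eqP ->; [left | right].
Qed.

Lemma odd_p : odd p.
Proof. by rewrite -(odd_mod p (erefl : odd 8 = false)); case: p_mod8 => ->. Qed.

Lemma dvdn_2p_pm1 d : odd d -> d %| 2 * p ->
  (d%:R = 1 :> 'Z_8 \/ d%:R = -1 :> 'Z_8)%R -> d = 1.
Proof.
move=> odd_d /(odd_dvdn_2p odd_d)[// | ->].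
by rewrite -(Zp_nat_mod (isT : 1 < 8)); case: p_mod8 => -> [].
Qed.

Definition pi4_pair M N :=
  exists L k, L + 2 * M ^ 2 = (M + N) ^ 2 /\ 2 * p * M * N * L = k ^ 2.

Lemma pi4_pair_scale g M N : 0 < g -> pi4_pair (g * M) (g * N) -> pi4_pair M N.
Proof.
move=> g_gt0 [L [k [eq_L eq_k]]]; have g2_gt0 : 0 < g ^ 2 by rewrite expn_gt0 g_gt0.
have /dvdnP[L' eq_L'] : g ^ 2 %| L.
  have : g ^ 2 %| L + 2 * (g * M) ^ 2 by rewrite eq_L -mulnDr expnMn dvdn_mulr.
  by rewrite dvdn_addl // expnMn mulnCA dvdn_mulr.
have [k' eq_k'] : exists k', 2 * p * M * N * L' = k' ^ 2.
  by apply: (sq_mul_eq_sq (k := k) g2_gt0); rewrite -eq_k eq_L'; ring.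
exists L', k'; split=> //; apply/eqP; rewrite -(eqn_pmul2l g2_gt0); apply/eqP.
by rewrite mulnDr -expnMn mulnDr -eq_L eq_L'; ring.
Qed.

(* With M' = y + t - s one gets t^2 + 2 M' t - M'^2 = 2 M' s, hence
   L' = 2 M' s and 2p M' t L' = (2p M' x)^2. *)
Lemma pi4_pair_descent_step s t x y : 0 < s -> 0 < t -> s * t = p * x ^ 2 ->
  y ^ 2 + 2 * (s * t) = s ^ 2 + 2 * t ^ 2 ->
  exists2 M', 0 < M' /\ M' + t < 2 * (s * t) + y ^ 2 & pi4_pair M' t.
Proof.
move=> s_gt0 t_gt0 eq_st eq_y.
have lt_s : s < y + t by nia.
exists (y + t - s); first split; [lia | |].
  have : t <= s * t by rewrite leq_pmull.
  have : y <= y ^ 2 by case: (y) => // y'; rewrite expnS leq_pmulr.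
  lia.
set M' := y + t - s; have eq_M' : M' + s = y + t by rewrite subnK // ltnW.
exists (2 * M' * s), (2 * p * M' * x); split; first nia.
have -> : 2 * p * M' * t * (2 * M' * s) = 4 * p * M' ^ 2 * (s * t) by ring.
by rewrite eq_st; ring.
Qed.

Section CoprimePair.
Variables M N L k : nat.
Hypotheses (M_gt0 : 0 < M) (N_gt0 : 0 < N) (coMN : coprime M N).
Hypotheses (eq_L : L + 2 * M ^ 2 = (M + N) ^ 2) (eq_k : 2 * p * M * N * L = k ^ 2).

Lemma coprime_ML : coprime M L.
Proof.
have co : coprime M ((M + N) ^ 2) by rewrite coprimeXr // /coprime gcdnDl.
rewrite /coprime -dvdn1 -(eqP co) dvdn_gcd dvdn_gcdl -eq_L dvdn_add ?dvdn_gcdr //.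
by rewrite dvdn_mull // dvdn_exp // dvdn_gcdl.
Qed.

Lemma coprime_NL : coprime N L.
Proof.
have eq_L' : L + M ^ 2 = N * (N + 2 * M) by lia.
have co : coprime N (M ^ 2) by rewrite coprimeXr // coprime_sym.
rewrite /coprime -dvdn1 -(eqP co) dvdn_gcd dvdn_gcdl.
by rewrite -(dvdn_addr _ (dvdn_gcdr N L)) eq_L' dvdn_mulr // dvdn_gcdl.
Qed.

Lemma coprime_MN_L : odd (M + N) -> coprime (M + N) L.
Proof.
move=> odd_MN; set d := gcdn (M + N) L.
have co_dM : coprime d (M ^ 2).
  by rewrite coprimeXr // coprime_sym (coprime_dvdr (dvdn_gcdr _ _) coprime_ML).
have : d %| 2 * M ^ 2 by rewrite -(dvdn_addr _ (dvdn_gcdr _ _)) eq_L dvdn_exp // dvdn_gcdl.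
rewrite (Gauss_dvdl _ co_dM) => d_dvd2.
by rewrite /coprime -dvdn1 -(eqP (_ : coprime (M + N) 2)) ?coprimen2 // dvdn_gcd dvdn_gcdl.
Qed.

Lemma L_gt0 : 0 < L.
Proof.
rewrite lt0n; apply/eqP => L0; move: eq_L; rewrite L0 add0n.
by move/(prime_mul_sq_eq_sq (isT : prime 2)) => M0; move: M_gt0; rewrite M0.
Qed.

Lemma pi4_pair_parts :
  exists x y z, [/\ M = gcdn (2 * p) M * x ^ 2, N = gcdn (2 * p) N * y ^ 2
                   & L = gcdn (2 * p) L * z ^ 2].
Proof.
have [x eM] : exists x, M = gcdn (2 * p) M * x ^ 2.
  apply: (coprime_mul_sq_gcd (Y := N * L) (k := k)); first by rewrite coprimeMr coMN coprime_ML.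
  by rewrite mulnA.
have [y eN] : exists y, N = gcdn (2 * p) N * y ^ 2.
  apply: (coprime_mul_sq_gcd (Y := M * L) (k := k)).
    by rewrite coprimeMr coprime_sym coMN coprime_NL.
  by rewrite -eq_k; ring.
have [z eL] : exists z, L = gcdn (2 * p) L * z ^ 2.
  apply: (coprime_mul_sq_gcd (Y := M * N) (k := k)).
    by rewrite coprimeMr !(coprime_sym L) coprime_ML coprime_NL.
  by rewrite -eq_k; ring.
by exists x, y, z.
Qed.

Lemma gcd_parts_prod_neq2 : gcdn (2 * p) M * gcdn (2 * p) N * gcdn (2 * p) L != 2.
Proof.
have [x [y [z]]] := pi4_pair_parts.
move: (gcdn _ M) (gcdn _ N) (gcdn _ L) => a b c [eM eN eL]; apply/eqP => abc2.
have xyz_gt0 : 0 < 2 * (x * y * z).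
  move: M_gt0 N_gt0 L_gt0; rewrite eM eN eL !muln_gt0 /=.
  by do 3![case/and3P=> _ -> _].
have : p * (2 * (x * y * z)) ^ 2 = k ^ 2.
  rewrite -eq_k eM eN eL.
  have -> : 2 * p * (a * x ^ 2) * (b * y ^ 2) * (c * z ^ 2)
      = 2 * p * (a * b * c) * (x * y * z) ^ 2 by ring.
  by rewrite abc2; ring.
by move/(prime_mul_sq_eq_sq p_prime) => xyz0; move: xyz_gt0; rewrite xyz0.
Qed.

Lemma gcd_2p_L_even_M : ~~ odd M -> gcdn (2 * p) L = 1.
Proof.
move=> even_M; have [_ [_ [z [_ _]]]] := pi4_pair_parts.
have := dvdn_gcdl (2 * p) L; move: (gcdn _ L) => c c_dvd eL.
have odd_L : odd L by rewrite -coprime2n (coprime_dvdl _ coprime_ML) // dvdn2.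
have odd_N : odd N by rewrite -coprime2n (coprime_dvdl _ coMN) // dvdn2.
have odd_MN : odd (M + N) by rewrite oddD (negbTE even_M) odd_N.
have odd_z : odd z by move: odd_L; rewrite eL oddM oddX => /andP[].
have odd_c : odd c by move: odd_L; rewrite eL oddM => /andP[].
apply: dvdn_2p_pm1 odd_c c_dvd _; left.
move/(congr1 (fun n => n%:R : 'Z_8)%R): eq_L; rewrite {1}eL natrD !(natrM _ _ (_ ^ 2)) !natrX.
by rewrite natrZ8_double_sqr (negbTE even_M) !natrZ8_sqr_odd // mulr1 mulr0 addr0.
Qed.

Lemma odd_N_of_odd_M : odd M -> odd N.
Proof.
move=> odd_M; apply/negPn/negP => even_N.
have [_ [_ [z [_ _]]]] := pi4_pair_parts.
have := dvdn_gcdl (2 * p) L; move: (gcdn _ L) => c c_dvd eL.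
have odd_L : odd L by rewrite -coprime2n (coprime_dvdl _ coprime_NL) // dvdn2.
have odd_MN : odd (M + N) by rewrite oddD odd_M (negbTE even_N).
have odd_z : odd z by move: odd_L; rewrite eL oddM oddX => /andP[].
have eq8 : (c%:R + 2 = 1 :> 'Z_8)%R.
  move/(congr1 (fun n => n%:R : 'Z_8)%R): eq_L; rewrite {1}eL natrD !(natrM _ _ (_ ^ 2)) !natrX.
  by rewrite natrZ8_double_sqr odd_M !natrZ8_sqr_odd // mulr1n !mulr1.
have c1 : c = 1.
  have odd_c : odd c by move: odd_L; rewrite eL oddM => /andP[].
  apply: dvdn_2p_pm1 odd_c c_dvd _; right.
  by apply: (addIr 2%R); rewrite eq8; apply/eqP.
by move: eq8; rewrite c1 => /eqP.
Qed.

Lemma odd_M_halve : odd M -> exists L' e,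
  [/\ L = 2 * L', L' + 2 * e ^ 2 = N ^ 2 & (M + 2 * e = N \/ M = N + 2 * e)].
Proof.
move=> odd_M; have odd_N := odd_N_of_odd_M odd_M.
have [D eq_D] : exists D, M + D = N \/ M = N + D.
  by case: (leqP M N) => [le_MN | lt_NM]; [exists (N - M); left | exists (M - N); right]; lia.
have eq_LD : L + D ^ 2 = 2 * N ^ 2.
  by case: eq_D => eD; move: eq_L; [rewrite -eD | rewrite eD]; lia.
have /dvdnP[e eq_e] : 2 %| D.
  by rewrite dvdn2; case: eq_D => /(congr1 odd); rewrite !oddD odd_M odd_N; case: (odd D).
have /dvdnP[L' eq_L'] : 2 %| L.
  by rewrite dvdn2; move/(congr1 odd): eq_LD; rewrite oddD eq_e !oddM /= !andbF addbF => ->.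
exists L', e; split; [lia | lia | by case: eq_D; [left | right]; lia].
Qed.

Lemma gcd_2p_L_odd_M : odd M -> gcdn (2 * p) L = 2.
Proof.
move=> odd_M; have odd_N := odd_N_of_odd_M odd_M.
have [_ [_ [z [_ _]]]] := pi4_pair_parts.
have := dvdn_gcdl (2 * p) L; move: (gcdn _ L) => c c_dvd eL.
have [L' [e [eq_L' eq_e _]]] := odd_M_halve odd_M.
have odd_L' : odd L' by move/(congr1 odd): eq_e; rewrite oddD oddX odd_N oddM /= addbF.
have odd_z : odd z.
  apply/negPn/negP; rewrite -dvdn2 => /dvdnP[z' ez]; move: odd_L'.
  by rewrite (_ : L' = c * z' ^ 2 * 2) ?oddM ?andbF //; move: eL; rewrite eq_L' ez; lia.
have even_c : ~~ odd c.
  move: eL; rewrite eq_L' => /(congr1 odd).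
  by rewrite (oddM c) oddX odd_z andbT => <-; rewrite oddM.
case: (even_dvdn_2p even_c c_dvd) => // c2p; exfalso.
have eq_pz : L' = p * z ^ 2 by move: eL; rewrite eq_L' c2p; lia.
have eq8 : (p%:R + 2 * (odd e)%:R = 1 :> 'Z_8)%R.
  move/(congr1 (fun n => n%:R : 'Z_8)%R): eq_e; rewrite eq_pz natrD !(natrM _ _ (_ ^ 2)) !natrX.
  by rewrite natrZ8_double_sqr !natrZ8_sqr_odd // mulr1.
suff p1 : p = 1 by move: (prime_gt1 p_prime); rewrite p1.
apply: dvdn_2p_pm1 odd_p (dvdn_mull _ (dvdnn p)) _.
move: eq8; case: (odd e) => /= eq8; [right | left].
  by apply: (addIr 2%R); rewrite mulr1n mulr1 in eq8; rewrite eq8; apply/eqP.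
by rewrite mulr0n mulr0 addr0 in eq8.
Qed.

(* Mod 8, N = s^2 + 2t^2 and M = N -+ 4st are 1 + 2e and 1 + 6e with e = t mod 2,
   so both are +-1 mod 8 and their parts a, b, which divide p, must both be 1. *)
Lemma M_even : ~~ odd M.
Proof.
apply/negP => odd_M; have odd_N := odd_N_of_odd_M odd_M.
have [x [y [z [+ + eL]]]] := pi4_pair_parts.
have := gcd_parts_prod_neq2; rewrite (gcd_2p_L_odd_M odd_M) in eL *.
have := dvdn_gcdl (2 * p) M; have := dvdn_gcdl (2 * p) N.
move: (gcdn _ M) (gcdn _ N) => a b b_dvd a_dvd ab2 eM eN.
have [odd_a odd_x] : odd a /\ odd x by move: odd_M; rewrite eM oddM oddX => /andP.
have [odd_b odd_y] : odd b /\ odd y by move: odd_N; rewrite eN oddM oddX => /andP.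
have [L' [e [eq_L' eq_e eq_Me]]] := odd_M_halve odd_M.
have co_Nz : coprime N z by rewrite (coprime_dvdr _ coprime_NL) // eL dvdn_mull // dvdn_exp.
have eq_Lz : L' = z ^ 2 by apply/eqP; rewrite -(eqn_pmul2l (isT : 0 < 2)) -eq_L' eL.
rewrite eq_Lz in eq_e.
have [s [t [eN_st e_st odd_s _]]] := sq_add_double_sq_param odd_N co_Nz eq_e.
have b8 : (b%:R = 1 + 2 * (odd t)%:R :> 'Z_8)%R.
  move/(congr1 (fun n => n%:R : 'Z_8)%R): eN_st; rewrite {1}eN natrD !(natrM _ _ (_ ^ 2)) !natrX.
  by rewrite natrZ8_double_sqr !natrZ8_sqr_odd // mulr1.
have e8 : ((2 * e)%:R = 4 * (odd t)%:R :> 'Z_8)%R.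
  by rewrite e_st mulnA natrM (natrZ8_mul4 (s * t)) oddM odd_s.
have a8 : (a%:R = b%:R + 4 * (odd t)%:R :> 'Z_8)%R.
  have aM : (a%:R = M%:R :> 'Z_8)%R by rewrite eM natrZ8_mul_sqr_odd.
  have bN : (b%:R = N%:R :> 'Z_8)%R by rewrite eN natrZ8_mul_sqr_odd.
  rewrite aM bN; case: eq_Me => [<- | ->]; rewrite natrD e8 // -addrA.
  by rewrite -mulrDl (_ : 4 + 4 = 0 :> 'Z_8)%R ?mul0r ?addr0 //; apply/eqP.
have a1 : a = 1.
  apply: dvdn_2p_pm1 odd_a a_dvd _; rewrite a8 b8.
  by case: (odd t); [right | left]; apply/eqP.
have even_t : ~~ odd t by move: a8; rewrite a1 b8; case: (odd t) => // /eqP.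
have b1 : b = 1.
  by apply: dvdn_2p_pm1 odd_b b_dvd _; left; rewrite b8 (negbTE even_t) mulr0 addr0.
by move: ab2; rewrite a1 b1.
Qed.

Lemma coprime_pi4_pair_descent :
  exists M' N', [/\ 0 < M', 0 < N', M' + N' < M + N & pi4_pair M' N'].
Proof.
have even_M := M_even.
have odd_N : odd N by rewrite -coprime2n (coprime_dvdl _ coMN) // dvdn2.
have odd_MN : odd (M + N) by rewrite oddD (negbTE even_M) odd_N.
have even_a : ~~ odd (gcdn (2 * p) M) by rewrite -dvdn2 dvdn_gcd dvdn_mulr // dvdn2.
have [x [y [z [eM eN eL]]]] := pi4_pair_parts.
have ab1 := gcd_parts_prod_neq2.
rewrite (gcd_2p_L_even_M even_M) mul1n muln1 in eL ab1.
have := dvdn_gcdl (2 * p) N; have := dvdn_gcdr (2 * p) N.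
have := dvdn_gcdl (2 * p) M; have := dvdn_gcdr (2 * p) M.
move: (gcdn (2 * p) M) (gcdn (2 * p) N) even_a eM eN ab1.
move=> a b even_a eM eN ab1 a_M a_dvd b_N b_dvd.
have [odd_b odd_y] : odd b /\ odd y by move: odd_N; rewrite eN oddM oddX => /andP.
have co_z : coprime (M + N) z by rewrite (coprime_dvdr _ (coprime_MN_L odd_MN)) // eL dvdn_exp.
have eq_z : z ^ 2 + 2 * M ^ 2 = (M + N) ^ 2 by rewrite -eL.
have [s [t [eMN eM_st odd_s co_st]]] := sq_add_double_sq_param odd_MN co_z eq_z.
have eN_st : N + 2 * (s * t) = s ^ 2 + 2 * t ^ 2 by rewrite -eM_st addnC.
case: (even_dvdn_2p even_a a_dvd) => [a2 | a2p].
  have [h [g [es et _]]] : exists h g, [/\ s = h ^ 2, t = g ^ 2 & x = h * g].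
    apply: coprime_mul_eq_sq co_st _; apply/eqP.
    by rewrite -(eqn_pmul2l (isT : 0 < 2)) -eM_st eM a2.
  have s8 : (s%:R = 1 :> 'Z_8)%R.
    by rewrite es natrX natrZ8_sqr_odd //; move: odd_s; rewrite es oddX.
  have t8 : (2 * t%:R = 2 * (odd t)%:R :> 'Z_8)%R by rewrite {1}et natrX natrZ8_double_sqr et oddX.
  have N8 : (N%:R = 1 :> 'Z_8)%R.
    move/(congr1 (fun n => n%:R : 'Z_8)%R): eN_st; rewrite 2!natrD !(natrM _ 2) natrM !natrX.
    by rewrite s8 mul1r expr1n t8 natrZ8_double_sqr => /addIr.
  have b1 : b = 1.
    apply: dvdn_2p_pm1 odd_b b_dvd _; left.
    by rewrite -[RHS]N8 eN natrZ8_mul_sqr_odd.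
  by move: ab1; rewrite a2 b1.
have b1 : b = 1.
  case: (odd_dvdn_2p odd_b b_dvd) => // bp.
  have : p %| gcdn M N by rewrite dvdn_gcd -{2}bp b_N (dvdn_trans _ a_M) // a2p dvdn_mull.
  by rewrite (eqP coMN) dvdn1 => /eqP p1; move: (prime_gt1 p_prime); rewrite p1.
have eq_st : s * t = p * x ^ 2.
  by apply/eqP; rewrite -(eqn_pmul2l (isT : 0 < 2)) -eM_st eM a2p mulnA.
have s_gt0 : 0 < s by case: (s) odd_s.
have t_gt0 : 0 < t.
  by move: M_gt0; rewrite eM_st !muln_gt0 => /andP[_ /andP[]].
rewrite eN b1 mul1n in eN_st.
have [M' [M'_gt0 lt_M'] pair'] := pi4_pair_descent_step s_gt0 t_gt0 eq_st eN_st.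
by exists M', t; split=> //; rewrite eM_st eN b1 mul1n.
Qed.

End CoprimePair.

Lemma no_pi4_pair M N : 0 < M -> 0 < N -> ~ pi4_pair M N.
Proof.
move: {2}(M + N) (leqnn (M + N)) => n.
elim: n M N => [|n IHn] M N le_n M_gt0 N_gt0 pair_MN; first lia.
have g_gt0 : 0 < gcdn M N by rewrite gcdn_gt0 M_gt0.
have [M' eM] := dvdnP (dvdn_gcdl M N); have [N' eN] := dvdnP (dvdn_gcdr M N).
have coMN' := coprime_gcd_cofactors g_gt0 eM eN.
set g := gcdn M N in g_gt0 eM eN.
have [M'_gt0 N'_gt0] : 0 < M' /\ 0 < N'.
  by move: M_gt0 N_gt0; rewrite eM eN !muln_gt0 => /andP[-> _] /andP[-> _].
move: pair_MN; rewrite eM eN !(mulnC _ g) => /(pi4_pair_scale g_gt0)[L [k [eq_L eq_k]]].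
have [M'' [N'' [M''_gt0 N''_gt0 lt_MN'' pair'']]] :=
  coprime_pi4_pair_descent M'_gt0 N'_gt0 coMN' eq_L eq_k.
apply: (IHn M'' N'') => //; move: le_n lt_MN''; rewrite eM eN; nia.
Qed.

End Descent.

Lemma pi4_congruent_pair p : pi4_congruent (2 * p) ->
  exists M N, [/\ 0 < M, 0 < N & pi4_pair p M N].
Proof.
case=> _ [a [b [c [a_gt0 b_gt0 c_gt0 eq_ab eq_c]]]].
set D := (c + a - b)%R.
have D_gt0 : (0 < D)%R by rewrite /D; nra.
have eq_D : (D ^+ 2 + 2 * b * D - b ^+ 2 = 2 * a * D)%R by rewrite /D; nra.
set t := (b / D)%R; have t_gt0 : (0 < t)%R by rewrite divr_gt0.
have [M [N [M_gt0 N_gt0 eM]]] :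
    exists M N, [/\ 0 < M, 0 < N & (M%:R = t * N%:R :> rat)%R].
  exists `|numq t|, `|denq t|; split.
  - by rewrite absz_gt0 numq_eq0 gt_eqF.
  - by rewrite absz_gt0 denq_neq0.
  rewrite !natr_absz normr_denq intr_norm ger0_norm ?numqE //.
  by rewrite mulr_ge0 ?ler0z ?ltW ?denq_gt0.
have D_neq0 : (D != 0)%R by rewrite gt_eqF.
have eL : ((N%:R ^+ 2 + 2 * M%:R * N%:R - M%:R ^+ 2) = N%:R ^+ 2 * (2 * a / D) :> rat)%R.
  transitivity (N%:R ^+ 2 * (D ^+ 2 + 2 * b * D - b ^+ 2) / D ^+ 2 : rat)%R.
    by rewrite eM /t; field.
  by rewrite eq_D; field.
have [L eq_L] : exists L, L + 2 * M ^ 2 = (M + N) ^ 2.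
  exists (N ^ 2 + 2 * M * N - M ^ 2).
  suff : M ^ 2 < N ^ 2 + 2 * M * N by lia.
  rewrite -(ltr_nat rat) natrD !natrX !natrM -subr_gt0 eL.
  by rewrite mulr_gt0 ?exprn_gt0 ?ltr0n // divr_gt0 ?mulr_gt0.
have eL_nat : (L%:R = N%:R ^+ 2 * (2 * a / D) :> rat)%R.
  rewrite -eL; move/(congr1 (fun n => n%:R : rat)%R): eq_L.
  rewrite natrD natrM !natrX natrD; lra.
have [k eq_k] : exists k, 2 * p * M * N * L = k ^ 2.
  apply: (@rat_sqr_eq_nat (4 * p%:R * N%:R ^+ 2 / D)%R).
  rewrite !natrM eM eL_nat /t.
  transitivity (4 * p%:R * (a * b) * N%:R ^+ 4 / D ^+ 2 : rat)%R; last by field.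
  by rewrite eq_ab natrM; field.
by exists M, N; split=> //; exists L, k.
Qed.

Theorem corollary3p3 (p : nat) :
  prime p -> (p %% 8 = 3 \/ p %% 8 = 5)%N -> ~ pi4_congruent (2 * p).
Proof.
move=> p_prime p_mod8 /pi4_congruent_pair[M [N [M_gt0 N_gt0]]].
exact: no_pi4_pair p_prime p_mod8 M N M_gt0 N_gt0.
Qed.
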